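(* Consider MDVI$(\alpha,K,M)$ with any $\alpha\in[0,1)$ and positive integers $K,M$ on an MDP as in the context, and set $v_K := w_K - \alpha w_{K-1}$. Then, for every realization of the samples and every $k\in\{1,\dots,K\}$, $$v^{\pi'_{k-1}} + \sum_{j=0}^{k-1}\gamma^j\pi_{k-1}P_{k-1-j}^{k-2}\varepsilon_{k-j} - \gamma^kH\mathbf{1} \;\le\; v_k \;\le\; v^{\pi'_k} + \sum_{j=0}^{k-1}\gamma^j\pi_kP_{k-j}^{k-1}\varepsilon_{k-j} + \gamma^kH\mathbf{1}.$$
   Context: MDP: finite state set $\mathcal{X}$, finite action set $\mathcal{A}$, discount $\gamma\in[0,1)$, reward $r\in[-1,1]^{\mathcal{X}\times\mathcal{A}}$, transition kernel $P(y|x,a)$, $H=1/(1-\gamma)$. $P$ is the matrix with $(Pv)(x,a)=\sum_yP(y|x,a)v(y)$; a policy $\pi$ is the matrix with $(\pi q)(x)=\sum_a\pi(a|x)q(x,a)$; $P^\pi := P\pi$; $T^\pi q=r+\gamma P^\pi q$; $q^\pi$ its fixed point, $v^\pi=\pi q^\pi$. $\mathbf 1$ all-ones vector; inequalities componentwise. MDVI$(\alpha,K,M)$: $s_0 = 0$, $w_0=w_{-1}=0$; for $k=0,\dots,K-1$: $v_k = w_k-\alpha w_{k-1}$; for each $(x,a)$, independent samples $y_{k,m,x,a}\sim P(\cdot|x,a)$, $m\in[M]$; $q_{k+1}(x,a) = r(x,a)+\frac{\gamma}{M}\sum_m v_k(y_{k,m,x,a})$; $s_{k+1}=q_{k+1}+\alpha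 s_k$; $w_{k+1}(x)=\max_a s_{k+1}(x,a)$. $\pi_k$ ($k=0,\dots,K$) is a deterministic greedy policy w.r.t. $s_k$. Notation: $\widehat P_k v(x,a)=\frac1M\sum_mv(y_{k,m,x,a})$; $\varepsilon_k=\gamma\widehat P_{k-1}v_{k-1}-\gamma Pv_{k-1}$ for $k\in[K]$. For $i\ge j$, $P_j^i := P^{\pi_i}\cdots P^{\pi_j}$, and $P_j^i:=I$ if $i<j$. $\pi'_k$ is the non-stationary policy following $\pi_{k-t}$ at time step $t\le k$ and $\pi_0$ afterwards; its value is $v^{\pi'_k}=\pi_kT^{\pi_{k-1}}\cdots T^{\pi_1}q^{\pi_0}$ (so $v^{\pi'_0}=v^{\pi_0}$). *)

From HB Require Import structures.
From mathcomp Require Import all_boot all_order all_algebra.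
Set Implicit Arguments. Unset Strict Implicit. Unset Printing Implicit Defensive.
Import Order.TTheory GRing.Theory Num.Theory.
Local Open Scope ring_scope.

Section MDP.
Variables (R : realFieldType) (X A : finType) (gamma : R)
  (r : X -> A -> R) (P : X -> A -> X -> R).

(* (P v)(x,a) = sum_y P(y|x,a) v(y);  P x a y stands for P(y|x,a). *)
Definition Pv (v : X -> R) : X -> A -> R := fun x a => \sum_(z : X) P x a z * v z.

Definition piapp (pi : X -> A) (q : X -> A -> R) : X -> R := fun x => q x (pi x).

Definition Ppi (pi : X -> A) (q : X -> A -> R) : X -> A -> R := Pv (piapp pi q).

Definition Tpi (pi : X -> A) (q : X -> A -> R) : X -> A -> R :=
  fun x a => r x a + gamma * Ppi pi q x a.

Fixpoint Pseg_aux (pis : nat -> X -> A) (j n : nat) (q : X -> A -> R) : X -> A -> R :=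
  match n with
  | 0 => q
  | n'.+1 => Ppi (pis (j + n')%N) (Pseg_aux pis j n' q)
  end.

(* Pseg pis j i1 = P_j^{i1 - 1} = P^{pi_{i1-1}} ... P^{pi_j}  (identity if i1 - 1 < j) *)
Definition Pseg (pis : nat -> X -> A) (j i1 : nat) (q : X -> A -> R) : X -> A -> R :=
  Pseg_aux pis j (i1 - j) q.

Fixpoint Tchain (pis : nat -> X -> A) (n : nat) (q : X -> A -> R) : X -> A -> R :=
  match n with
  | 0 => q
  | n'.+1 => Tpi (pis n'.+1) (Tchain pis n' q)
  end.

(* value of the non-stationary policy pi'_k : pi_k T^{pi_{k-1}} ... T^{pi_1} q^{pi_0},
   where qpi0 is (the) fixed point of T^{pi_0}. *)
Definition v_nonstat (pis : nat -> X -> A) (k : nat) (qpi0 : X -> A -> R) : X -> R :=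
  piapp (pis k) (Tchain pis k.-1 qpi0).

Variables (alpha : R) (M : nat) (a0 : A) (y : nat -> 'I_M -> X -> A -> X).

(* max_a s(x,a)  (a0 is only used as a seed; the value does not depend on it) *)
Definition qmax (s : X -> A -> R) : X -> R :=
  fun x => \big[Num.max/s x a0]_(a : A) s x a.

Definition Phat (k : nat) (v : X -> R) : X -> A -> R :=
  fun x a => (M%:R)^-1 * \sum_(m < M) v (y k m x a).

(* mdvi k = (s_k, w_k, w_{k-1}) *)
Fixpoint mdvi (k : nat) : (X -> A -> R) * (X -> R) * (X -> R) :=
  match k with
  | 0 => (fun _ _ => 0, fun _ => 0, fun _ => 0)
  | k'.+1 =>
      let: (s, w, wp) := mdvi k' in
      let v := fun x => w x - alpha * wp x in
      let q := fun x a => r x a + gamma * Phat k' v x a in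
      let s' := fun x a => q x a + alpha * s x a in
      (s', qmax s', w)
  end.

Definition s_ (k : nat) : X -> A -> R := (mdvi k).1.1.
Definition w_ (k : nat) : X -> R := (mdvi k).1.2.
(* v_k = w_k - alpha w_{k-1}  (with w_{-1} = 0) *)
Definition v_ (k : nat) : X -> R := fun x => w_ k x - alpha * (mdvi k).2 x.
Definition eps (k : nat) : X -> A -> R :=
  fun x a => gamma * Phat k.-1 (v_ k.-1) x a - gamma * Pv (v_ k.-1) x a.

End MDP.

From mathcomp Require Import all_boot all_order all_algebra.
From mathcomp Require Import ring lra.
Import Order.TTheory GRing.Theory Num.Theory.
Local Open Scope ring_scope.
Set Implicit Arguments. Unset Strict Implicit.

(* Write q_{k+1} = r + gamma hat P_k v_k = r + gamma P v_k + eps_{k+1}.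
   Since s_{k+1} = q_{k+1} + alpha s_k and pi_k is greedy for s_k, the increment
   v_{k+1} = w_{k+1} - alpha w_k lies between q_{k+1} evaluated at pi_k and at
   pi_{k+1}.  Unrolling these one-step inequalities with the monotonicity of P,
   starting from v_0 = 0, which is within H of v^{pi_0} because |q^{pi_0}| <= H,
   produces the chain T^{pi_k} ... T^{pi_1} q^{pi_0}, the propagated errors and
   the residual gamma^k H.  The lower bound is the same recursion run along
   the delayed policies pi_{n-1}. *)

Section StochasticKernel.
Variables (R : realFieldType) (X A : finType) (gamma : R)
  (r : X -> A -> R) (P : X -> A -> X -> R).
Hypothesis P_ge0 : forall x a z, 0 <= P x a z.
Hypothesis P_sum1 : forall x a, \sum_(z : X) P x a z = 1.

Lemma le_Pv (f g : X -> R) x a :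
  (forall z, f z <= g z) -> Pv P f x a <= Pv P g x a.
Proof. by move=> fg; apply: ler_sum => z _; exact: ler_wpM2l. Qed.

Lemma eq_Pv (f g : X -> R) x a : f =1 g -> Pv P f x a = Pv P g x a.
Proof. by move=> fg; apply: eq_bigr => z _; rewrite fg. Qed.

Lemma Pv_cst c x a : Pv P (fun _ => c) x a = c.
Proof. by rewrite /Pv -big_distrl /= P_sum1 mul1r. Qed.

Lemma PvD (f g : X -> R) x a :
  Pv P (fun z => f z + g z) x a = Pv P f x a + Pv P g x a.
Proof. by rewrite /Pv -big_split; apply: eq_bigr => z _; rewrite mulrDr. Qed.

Lemma PvZ c (f : X -> R) x a : Pv P (fun z => c * f z) x a = c * Pv P f x a.
Proof. by rewrite /Pv mulr_sumr; apply: eq_bigr => z _; rewrite mulrCA. Qed.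

Lemma Pv_sum n (F : 'I_n -> X -> R) x a :
  Pv P (fun z => \sum_(j < n) F j z) x a = \sum_(j < n) Pv P (F j) x a.
Proof.
rewrite /Pv; under eq_bigr => z _ do rewrite mulr_sumr.
exact: exchange_big.
Qed.

Lemma norm_Pv_le (f : X -> R) c x a :
  (forall z, `|f z| <= c) -> `|Pv P f x a| <= c.
Proof.
move=> fc; have fc' z : - c <= f z <= c by rewrite -ler_norml.
rewrite ler_norml; apply/andP; split.
  by rewrite -{1}(Pv_cst (- c) x a); apply: le_Pv => z; case/andP: (fc' z).
by rewrite -(Pv_cst c x a); apply: le_Pv => z; case/andP: (fc' z).
Qed.

Lemma fixed_point_bound (pi : X -> A) (q : X -> A -> R) :
  0 <= gamma < 1 -> (forall x a, `|r x a| <= 1) ->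
  (forall x a, q x a = Tpi gamma r P pi q x a) ->
  forall x a, `|q x a| <= (1 - gamma)^-1.
Proof.
move=> /andP[g0 g1] r1 q_fix x a.
pose m := \big[Num.max/0]_(p : X * A) `|q p.1 p.2|.
have q_le_m (x' : X) (a' : A) : `|q x' a'| <= m by exact: (le_bigmax _ _ (x', a')).
have m_ge0 : 0 <= m := le_trans (normr_ge0 _) (q_le_m x a).
have m_le : m <= 1 + gamma * m.
  apply: bigmax_le => [|[x' a'] _ /=]; first by rewrite addr_ge0 ?mulr_ge0.
  rewrite q_fix; apply: le_trans (ler_normD _ _) _; apply: lerD => //.
  rewrite normrM ger0_norm //; apply: ler_wpM2l => //.
  by apply: norm_Pv_le => z; apply: q_le_m.
apply: le_trans (q_le_m x a) _.
by rewrite -[_^-1]mul1r ler_pdivlMr ?subr_gt0 //; lra.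
Qed.

Lemma PsegS (sig : nat -> X -> A) j i q :
  (j <= i)%N -> Pseg P sig j i.+1 q = Ppi P (sig i) (Pseg P sig j i q).
Proof. by move=> ji; rewrite /Pseg subSn //= subnKC. Qed.

Lemma Pseg_pred (sig : nat -> X -> A) j i q : (j <= i)%N ->
  Pseg P (fun n => sig n.-1) (i.+1 - j) i.+1 q = Pseg P sig (i - j) i q.
Proof.
move=> ji; rewrite /Pseg subSn // subSS.
by elim: (i - (i - j))%N => //= n ->.
Qed.

Lemma TchainE (pis : nat -> X -> A) q k x a :
  (forall x a, q x a = Tpi gamma r P (pis 0%N) q x a) ->
  Tchain gamma r P pis k q x a = Tpi gamma r P (pis k) (Tchain gamma r P pis k.-1 q) x a.
Proof. by case: k. Qed.

Fixpoint err_prop (sig : nat -> X -> A) (e : nat -> X -> A -> R) (k : nat) :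
    X -> A -> R :=
  match k with
  | 0 => fun _ _ => 0
  | k'.+1 => fun x a => e k x a + gamma * Ppi P (sig k') (err_prop sig e k') x a
  end.

Lemma err_propE sig e k x a :
  err_prop sig e k x a = \sum_(j < k) gamma ^+ j * Pseg P sig (k - j) k (e (k - j)%N) x a.
Proof.
elim: k x a => [|k IH] x a; first by rewrite big_ord0.
rewrite big_ord_recl subn0 /Pseg subnn /= expr0 mul1r; congr (_ + _).
rewrite /Ppi /piapp; under eq_Pv => z do rewrite IH.
rewrite Pv_sum mulr_sumr; apply: eq_bigr => j _.
by rewrite subSS -/(Pseg _ _ _ _ _) PsegS ?leq_subr // PvZ exprS mulrA.
Qed.

Section ErrorPropagation.
Hypothesis gamma_ge0 : 0 <= gamma.
Variables (sig : nat -> X -> A) (c e : nat -> X -> A -> R) (v : nat -> X -> R).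
Variables (b : R) (K : nat).
Hypothesis c_rec : forall k x a, c k.+1 x a = Tpi gamma r P (sig k) (c k) x a.

Lemma propagate_upper :
  (forall x, v 0%N x <= piapp (sig 0%N) (c 0%N) x + b) ->
  (forall k x, (k < K)%N -> let a := sig k.+1 x in
     v k.+1 x <= r x a + gamma * Pv P (v k) x a + e k.+1 x a) ->
  forall k x, (k <= K)%N ->
  v k x <=
    piapp (sig k) (c k) x + piapp (sig k) (err_prop sig e k) x + gamma ^+ k * b.
Proof.
move=> v0 vS; elim=> [|k IH] x kK; first by rewrite addr0 mul1r.
apply: le_trans (vS k x kK) _.
rewrite /piapp c_rec /= /Tpi /Ppi -/(piapp (sig k) (c k)).
have := le_Pv x (sig k.+1 x) (IH^~ (ltnW kK)).
rewrite !PvD Pv_cst => /(ler_wpM2l gamma_ge0); rewrite exprS; lra.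
Qed.

Lemma propagate_lower :
  (forall x, piapp (sig 0%N) (c 0%N) x - b <= v 0%N x) ->
  (forall k x, (k < K)%N -> let a := sig k.+1 x in
     r x a + gamma * Pv P (v k) x a + e k.+1 x a <= v k.+1 x) ->
  forall k x, (k <= K)%N ->
  piapp (sig k) (c k) x + piapp (sig k) (err_prop sig e k) x - gamma ^+ k * b
    <= v k x.
Proof.
move=> v0 vS; elim=> [|k IH] x kK; first by rewrite addr0 mul1r.
apply: le_trans (vS k x kK).
rewrite /piapp c_rec /= /Tpi /Ppi -/(piapp (sig k) (c k)).
have := le_Pv x (sig k.+1 x) (IH^~ (ltnW kK)).
rewrite !PvD Pv_cst => /(ler_wpM2l gamma_ge0); rewrite exprS; lra.
Qed.

End ErrorPropagation.

End StochasticKernel.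

Section MDVI.
Variables (R : realFieldType) (X A : finType) (gamma : R) (r : X -> A -> R).
Variables (alpha : R) (M : nat) (a0 : A) (y : nat -> 'I_M -> X -> A -> X).

Local Notation s := (s_ gamma r alpha a0 y).
Local Notation w := (w_ gamma r alpha a0 y).
Local Notation v := (v_ gamma r alpha a0 y).

Definition q_ (k : nat) : X -> A -> R :=
  fun x a => r x a + gamma * Phat y k.-1 (v k.-1) x a.

Lemma mdviS k : mdvi gamma r alpha a0 y k.+1 =
  (fun x a => q_ k.+1 x a + alpha * s k x a,
   qmax a0 (fun x a => q_ k.+1 x a + alpha * s k x a), w k).
Proof. by rewrite /q_ /v_ /s_ /w_ /=; case: (mdvi _ _ _ _ _ k) => [[]]. Qed.

Lemma s_S k x a : s k.+1 x a = q_ k.+1 x a + alpha * s k x a.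
Proof. by rewrite /s_ mdviS. Qed.

Lemma w_S k : w k.+1 = qmax a0 (s k.+1).
Proof. by rewrite /w_ /s_ mdviS. Qed.

Lemma v_S k x : v k.+1 x = w k.+1 x - alpha * w k x.
Proof. by rewrite /v_ mdviS. Qed.

Lemma v_0 x : v 0%N x = 0.
Proof. by rewrite /v_ /w_ /= mulr0 subr0. Qed.

Lemma q_S (P : X -> A -> X -> R) k x a :
  q_ k.+1 x a = r x a + gamma * Pv P (v k) x a + eps gamma r P alpha a0 y k.+1 x a.
Proof. by rewrite /q_ /eps /=; ring. Qed.

Lemma qmax_greedy (q : X -> A -> R) (pi : X -> A) x :
  (forall a, q x a <= q x (pi x)) -> qmax a0 q x = q x (pi x).
Proof.
move=> pi_max; apply/le_anti; rewrite (le_bigmax _ _ (pi x)) andbT.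
exact: bigmax_le.
Qed.

Section Greedy.
Variables (K : nat) (pis : nat -> X -> A).
Hypothesis alpha_ge0 : 0 <= alpha.
Hypothesis greedy : forall k, (k <= K)%N -> forall x a, s k x a <= s k x (pis k x).

Lemma w_greedy k x : (k <= K)%N -> w k x = s k x (pis k x).
Proof. by case: k => [|k] // kK; rewrite w_S; apply: qmax_greedy; apply: greedy. Qed.

Lemma v_le_q k x : (k < K)%N -> v k.+1 x <= q_ k.+1 x (pis k.+1 x).
Proof.
move=> kK; rewrite v_S !w_greedy ?(ltnW kK) // s_S.
have := ler_wpM2l alpha_ge0 (greedy (ltnW kK) x (pis k.+1 x)); lra.
Qed.

Lemma q_le_v k x : (k < K)%N -> q_ k.+1 x (pis k x) <= v k.+1 x.
Proof.
move=> kK; rewrite v_S !w_greedy ?(ltnW kK) //.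
have := greedy kK x (pis k x); rewrite !s_S; lra.
Qed.

End Greedy.

End MDVI.

Theorem lemma25 (R : realFieldType) (X A : finType) (a0 : A) (gamma : R)
  (r : X -> A -> R) (P : X -> A -> X -> R) (alpha : R) (K M : nat)
  (y : nat -> 'I_M -> X -> A -> X) (pis : nat -> X -> A) (qpi0 : X -> A -> R) :
  0 <= gamma < 1 ->
  (forall x a, -1 <= r x a <= 1) ->
  (forall x a z, 0 <= P x a z) ->
  (forall x a, \sum_(z : X) P x a z = 1) ->
  0 <= alpha < 1 ->
  (0 < K)%N -> (0 < M)%N ->
  (* pi_k (k = 0..K) is a deterministic greedy policy w.r.t. s_k *)
  (forall k, (k <= K)%N -> forall x a,
     s_ gamma r alpha a0 y k x a <= s_ gamma r alpha a0 y k x (pis k x)) ->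
  (* qpi0 = q^{pi_0}, the fixed point of T^{pi_0} *)
  (forall x a, qpi0 x a = Tpi gamma r P (pis 0%N) qpi0 x a) ->
  forall k, (1 <= k <= K)%N -> forall x,
    v_nonstat gamma r P pis k.-1 qpi0 x
      + \sum_(j < k) gamma ^+ j *
          piapp (pis k.-1) (Pseg P pis (k.-1 - j) k.-1 (eps gamma r P alpha a0 y (k - j))) x
      - gamma ^+ k * (1 - gamma)^-1
    <= v_ gamma r alpha a0 y k x
  /\
    v_ gamma r alpha a0 y k x
    <= v_nonstat gamma r P pis k qpi0 x
      + \sum_(j < k) gamma ^+ j *
          piapp (pis k) (Pseg P pis (k - j) k (eps gamma r P alpha a0 y (k - j))) x
      + gamma ^+ k * (1 - gamma)^-1.
Proof.
move=> gamma01 r_bd P_ge0 P_sum1 /andP[alpha_ge0 _] _ _ greedy q_fix.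
case=> [//|k] /andP[_ kK] x.
have /andP[gamma_ge0 _] := gamma01.
have r_norm x' a' : `|r x' a'| <= 1 by rewrite ler_norml.
have q_bd x' a' : - (1 - gamma)^-1 <= qpi0 x' a' <= (1 - gamma)^-1.
  by rewrite -ler_norml; exact: fixed_point_bound q_fix x' a'.
have lower := propagate_lower P_ge0 P_sum1 gamma_ge0
  (sig := fun n => pis n.-1) (c := fun n => Tchain gamma r P pis n.-2 qpi0)
  (e := eps gamma r P alpha a0 y) (v := v_ gamma r alpha a0 y)
  (b := (1 - gamma)^-1) (K := K)
  (fun k' x' a' => TchainE k'.-1 x' a' q_fix).
have upper := propagate_upper P_ge0 P_sum1 gamma_ge0
  (sig := pis) (c := fun n => Tchain gamma r P pis n.-1 qpi0)
  (e := eps gamma r P alpha a0 y) (v := v_ gamma r alpha a0 y)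
  (b := (1 - gamma)^-1) (K := K)
  (fun k' x' a' => TchainE k' x' a' q_fix).
split.
- have -> : \sum_(j < k.+1) gamma ^+ j *
        piapp (pis k) (Pseg P pis (k - j) k (eps gamma r P alpha a0 y (k.+1 - j))) x =
      piapp (pis k)
        (err_prop gamma P (fun n => pis n.-1) (eps gamma r P alpha a0 y) k.+1) x.
    by rewrite /piapp err_propE; apply: eq_bigr => j _; rewrite Pseg_pred // -ltnS.
  apply: lower kK => [x'|k' x' k'K /=].
    by rewrite v_0 /piapp /=; have := q_bd x' (pis 0%N x'); lra.
  by rewrite -q_S; exact (q_le_v greedy x' k'K).
- have -> : \sum_(j < k.+1) gamma ^+ j * piapp (pis k.+1)
        (Pseg P pis (k.+1 - j) k.+1 (eps gamma r P alpha a0 y (k.+1 - j))) x =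
      piapp (pis k.+1) (err_prop gamma P pis (eps gamma r P alpha a0 y) k.+1) x.
    by rewrite /piapp err_propE.
  apply: upper kK => [x'|k' x' k'K /=].
    by rewrite v_0 /piapp /=; have := q_bd x' (pis 0%N x'); lra.
  by rewrite -q_S; exact (v_le_q alpha_ge0 greedy x' k'K).
Qed.
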